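(* Let $T\in\mathcal B(\mathcal H)$. The function $\Psi_T^{-1}(z)=\|(T-z)^{-1}\|$ is semiconvex on the open set $\mathbb C\setminus\sigma(T)$ with bound function $C(z)=2\Psi_T(z)^{-3}$. That is, for every compact convex set $B\subset\mathbb C\setminus\sigma(T)$, setting $C'=\max_{z\in B}2\Psi_T(z)^{-3}$, one has $$2\Psi_T^{-1}(\mu)-\Psi_T^{-1}(\mu+\eta)-\Psi_T^{-1}(\mu-\eta)\le C'|\eta|^2$$ for all $\mu,\eta\in\mathbb C$ with $[\mu-\eta,\mu+\eta]\subset B$.
   Context: $\mathcal H$ is a complex Hilbert space. $\Psi_T(z)=\|(T-z)^{-1}\|^{-1}$ for $z\notin\sigma(T)$. Definition: for $A\subset\mathbb R^n$ and continuous $u:A\to\mathbb R$, $u$ is semiconvex with constant $C\ge0$ if $2u(\mu)-u(\mu+\eta)-u(\mu-\eta)\le C|\eta|^2$ whenever the segment $[\mu-\eta,\mu+\eta]\subset A$; for an open set $A$ and positive continuous $C:A\to\mathbb R$, $u$ is semiconvex with bound function $C(x)$ if for every compact convex $B\subset A$ the restriction $u|_B$ is semiconvex with constant $\max_{x\in B}C(x)$. Here $\mathbb C$ is identified with $\mathbb R^2$. *)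

From Stdlib Require Import Reals Lra Classical ClassicalEpsilon.
Open Scope R_scope.

Definition CC : Type := (R * R)%type.
Definition Cre (z : CC) : R := fst z.
Definition Cim (z : CC) : R := snd z.
Definition C0 : CC := (0, 0).
Definition C1 : CC := (1, 0).
Definition Cadd (a b : CC) : CC := (fst a + fst b, snd a + snd b).
Definition Copp (a : CC) : CC := (- fst a, - snd a).
Definition Csub (a b : CC) : CC := Cadd a (Copp b).
Definition Cmul (a b : CC) : CC :=
  (fst a * fst b - snd a * snd b, fst a * snd b + snd a * fst b).
Definition Cconj (a : CC) : CC := (fst a, - snd a).
Definition Rscal (t : R) (a : CC) : CC := (t * fst a, t * snd a).
Definition Cabs (a : CC) : R := sqrt (fst a ^ 2 + snd a ^ 2).

Record HilbertSpace : Type := {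
  hcar :> Type;
  hzero : hcar;
  hadd : hcar -> hcar -> hcar;
  hopp : hcar -> hcar;
  hscal : CC -> hcar -> hcar;
  hinner : hcar -> hcar -> CC;
  hadd_assoc : forall x y z, hadd x (hadd y z) = hadd (hadd x y) z;
  hadd_comm : forall x y, hadd x y = hadd y x;
  hadd_zero : forall x, hadd hzero x = x;
  hadd_opp : forall x, hadd (hopp x) x = hzero;
  hscal_one : forall x, hscal C1 x = x;
  hscal_assoc : forall a b x, hscal a (hscal b x) = hscal (Cmul a b) x;
  hscal_distr_vec : forall a x y, hscal a (hadd x y) = hadd (hscal a x) (hscal a y);
  hscal_distr_sc : forall a b x, hscal (Cadd a b) x = hadd (hscal a x) (hscal b x);
  hinner_conj : forall x y, hinner x y = Cconj (hinner y x);
  hinner_add : forall x y z, hinner (hadd x y) z = Cadd (hinner x z) (hinner y z);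
  hinner_scal : forall a x y, hinner (hscal a x) y = Cmul a (hinner x y);
  hinner_pos : forall x, 0 <= fst (hinner x x);
  hinner_def : forall x, hinner x x = C0 -> x = hzero;
  hcomplete : forall u : nat -> hcar,
    (forall eps, 0 < eps -> exists N, forall m n, (N <= m)%nat -> (N <= n)%nat ->
       sqrt (fst (hinner (hadd (u m) (hopp (u n))) (hadd (u m) (hopp (u n))))) < eps) ->
    exists l, forall eps, 0 < eps -> exists N, forall n, (N <= n)%nat ->
       sqrt (fst (hinner (hadd (u n) (hopp l)) (hadd (u n) (hopp l)))) < eps
}.

Arguments hzero {_}. Arguments hadd {_}. Arguments hopp {_}.
Arguments hscal {_}. Arguments hinner {_}.

Definition hnorm {H : HilbertSpace} (x : H) : R := sqrt (fst (hinner x x)).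

Definition is_linear {H : HilbertSpace} (T : H -> H) : Prop :=
  (forall x y, T (hadd x y) = hadd (T x) (T y)) /\
  (forall a x, T (hscal a x) = hscal a (T x)).

Definition is_bounded_op {H : HilbertSpace} (T : H -> H) : Prop :=
  is_linear T /\ exists M, forall x, hnorm (T x) <= M * hnorm x.

(* operator norm: ||T|| = sup { ||T x|| : ||x|| <= 1 } (0 if no sup exists,
   which never happens for bounded T) *)
Definition opnorm {H : HilbertSpace} (T : H -> H) : R :=
  match excluded_middle_informative
          (exists r, is_lub (fun y => exists x, hnorm x <= 1 /\ y = hnorm (T x)) r) with
  | left h => proj1_sig (constructive_indefinite_description _ h)
  | right _ => 0
  end.

Definition shift_op {H : HilbertSpace} (T : H -> H) (z : CC) : H -> H :=
  fun x => hadd (T x) (hopp (hscal z x)).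

Definition is_inverse_op {H : HilbertSpace} (A S : H -> H) : Prop :=
  is_bounded_op S /\ (forall x, S (A x) = x) /\ (forall x, A (S x) = x).

Definition invertible_op {H : HilbertSpace} (A : H -> H) : Prop :=
  exists S, is_inverse_op A S.

Definition spectrum {H : HilbertSpace} (T : H -> H) (z : CC) : Prop :=
  ~ invertible_op (shift_op T z).

Definition resolvent_set {H : HilbertSpace} (T : H -> H) (z : CC) : Prop :=
  ~ spectrum T z.

(* (T - z)^{-1}  (arbitrary value off the resolvent set) *)
Definition resolvent {H : HilbertSpace} (T : H -> H) (z : CC) : H -> H :=
  match excluded_middle_informative (invertible_op (shift_op T z)) with
  | left h => proj1_sig (constructive_indefinite_description _ h)
  | right _ => fun _ => hzero
  end.

Definition PsiT {H : HilbertSpace} (T : H -> H) (z : CC) : R :=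
  / opnorm (resolvent T z).
Definition PsiT_inv {H : HilbertSpace} (T : H -> H) (z : CC) : R :=
  opnorm (resolvent T z).

Definition open_set (A : CC -> Prop) : Prop :=
  forall z, A z -> exists r, 0 < r /\ forall w, Cabs (Csub w z) < r -> A w.

Definition compact_set (B : CC -> Prop) : Prop :=
  forall (I : Type) (U : I -> CC -> Prop),
    (forall i, open_set (U i)) ->
    (forall z, B z -> exists i, U i z) ->
    exists l : list I, forall z, B z -> exists i, List.In i l /\ U i z.

Definition convex_set (B : CC -> Prop) : Prop :=
  forall x y t, B x -> B y -> 0 <= t <= 1 ->
    B (Cadd (Rscal (1 - t) x) (Rscal t y)).

Definition segment_in (a b : CC) (A : CC -> Prop) : Prop :=
  forall t, 0 <= t <= 1 -> A (Cadd (Rscal (1 - t) a) (Rscal t b)).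

Definition semiconvex_const (A : CC -> Prop) (u : CC -> R) (c : R) : Prop :=
  forall mu eta, segment_in (Csub mu eta) (Cadd mu eta) A ->
    2 * u mu - u (Cadd mu eta) - u (Csub mu eta) <= c * (Cabs eta) ^ 2.

Definition is_max_on (f : CC -> R) (B : CC -> Prop) (m : R) : Prop :=
  (exists z0, B z0 /\ f z0 = m) /\ (forall z, B z -> f z <= m).

Definition semiconvex_bound (A : CC -> Prop) (u : CC -> R) (C : CC -> R) : Prop :=
  forall B : CC -> Prop,
    compact_set B -> convex_set B -> (forall z, B z -> A z) ->
    forall c, is_max_on C B c -> semiconvex_const B u c.

(* Write R(z) = (T - z)^-1.  Applying the resolvent identity
   R(a) - R(b) = (a - b) R(a) R(b) three times gives
     R(mu + eta) + R(mu - eta) - 2 R(mu) = 2 eta^2 R(mu + eta) R(mu - eta) R(mu),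
   hence
     2 ||R(mu)|| - ||R(mu + eta)|| - ||R(mu - eta)||
       <= 2 |eta|^2 ||R(mu + eta)|| ||R(mu - eta)|| ||R(mu)||.
   By AM-GM the product of the three norms is at most the average of their
   cubes, and each cube is at most C'/2 on B, where C' = max_B 2 ||R||^3. *)
From Pilot Require Import Defs.
From Stdlib Require Import Reals Lra Classical ClassicalEpsilon.
Open Scope R_scope.

Ltac complex_ring :=
  unfold Cadd, Csub, Copp, Cmul, Rscal, C0, Defs.C1;
  apply injective_projections; simpl; field.

Lemma Cabs_mul (a b : CC) : Cabs (Cmul a b) = Cabs a * Cabs b.
Proof.
  unfold Cabs, Cmul; simpl. rewrite <- sqrt_mult by nra. f_equal; ring.
Qed.

Lemma Cabs_opp (a : CC) : Cabs (Copp a) = Cabs a.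
Proof. unfold Cabs, Copp; simpl. f_equal; ring. Qed.

Lemma Cabs_double (a : CC) : Cabs (Cadd a a) = 2 * Cabs a.
Proof.
  unfold Cabs, Cadd; cbn [fst snd].
  replace ((fst a + fst a) ^ 2 + (snd a + snd a) ^ 2)
    with (2 ^ 2 * (fst a ^ 2 + snd a ^ 2)) by ring.
  rewrite sqrt_mult, sqrt_pow2 by nra. reflexivity.
Qed.

Section VectorAlgebra.
Context {H : HilbertSpace}.
Implicit Types x y z : H.

Lemma hadd0r x : hadd x hzero = x.
Proof. rewrite hadd_comm; apply hadd_zero. Qed.

Lemma hadd_oppr x : hadd x (hopp x) = hzero.
Proof. rewrite hadd_comm; apply hadd_opp. Qed.

Lemma hadd_injl z x y : hadd z x = hadd z y -> x = y.
Proof.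
  intro E. rewrite <- (hadd_zero H x), <- (hadd_zero H y), <- (hadd_opp H z),
    <- !hadd_assoc, E; reflexivity.
Qed.

Lemma hscal0 x : hscal C0 x = hzero.
Proof.
  apply (hadd_injl (hscal C0 x)). rewrite hadd0r, <- hscal_distr_sc.
  f_equal. complex_ring.
Qed.

Lemma hopp_scalN1 x : hopp x = hscal (-1, 0) x.
Proof.
  apply (hadd_injl x). rewrite hadd_oppr, <- (hscal_one H x) at 1.
  rewrite <- hscal_distr_sc, <- (hscal0 x). f_equal. complex_ring.
Qed.

Lemma hadd_ACA x y z (w : H) :
  hadd (hadd x y) (hadd z w) = hadd (hadd x z) (hadd y w).
Proof.
  rewrite <- !hadd_assoc. f_equal. rewrite !hadd_assoc. f_equal. apply hadd_comm.
Qed.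

Lemma linear0 (S : H -> H) : is_linear S -> S hzero = hzero.
Proof.
  intros [Sadd _]. apply (hadd_injl (S hzero)).
  rewrite hadd0r, <- Sadd, hadd_zero; reflexivity.
Qed.

End VectorAlgebra.

Section InnerProduct.
Context {H : HilbertSpace}.
Implicit Types x y z : H.

Definition rinner x y : R := fst (hinner x y).

Lemma rinner_sym x y : rinner x y = rinner y x.
Proof. unfold rinner. rewrite hinner_conj. reflexivity. Qed.

Lemma rinner_addl x y z : rinner (hadd x y) z = rinner x z + rinner y z.
Proof. unfold rinner. rewrite hinner_add. reflexivity. Qed.

Lemma rinner_addr x y z : rinner z (hadd x y) = rinner z x + rinner z y.
Proof. rewrite !(rinner_sym z). apply rinner_addl. Qed.

Lemma rinner_scall t x y : rinner (hscal (t, 0) x) y = t * rinner x y.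
Proof. unfold rinner. rewrite hinner_scal. simpl. ring. Qed.

Lemma rinner_scalr t x y : rinner y (hscal (t, 0) x) = t * rinner y x.
Proof. rewrite !(rinner_sym y). apply rinner_scall. Qed.

Lemma rinner_ge0 x : 0 <= rinner x x.
Proof. apply hinner_pos. Qed.

Lemma hinner_self_im x : snd (hinner x x) = 0.
Proof.
  pose proof (hinner_conj H x x) as E. destruct (hinner x x) as [a b].
  unfold Cconj in E; simpl in *. injection E; intros; lra.
Qed.

Lemma rinner_scal_self a x :
  rinner (hscal a x) (hscal a x) = (fst a ^ 2 + snd a ^ 2) * rinner x x.
Proof.
  unfold rinner. rewrite hinner_scal, hinner_conj, hinner_scal.
  pose proof (hinner_self_im x) as E.
  destruct (hinner x x) as [q1 q2], a as [a1 a2]; simpl in *.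
  subst q2. ring.
Qed.

Lemma hnorm_sqr x : hnorm x ^ 2 = rinner x x.
Proof. apply pow2_sqrt, rinner_ge0. Qed.

Lemma hnorm_ge0 x : 0 <= hnorm x.
Proof. apply sqrt_pos. Qed.

Lemma hnorm_scal a x : hnorm (hscal a x) = Cabs a * hnorm x.
Proof.
  unfold hnorm, Cabs. fold (rinner (hscal a x) (hscal a x)) (rinner x x).
  rewrite rinner_scal_self. apply sqrt_mult; [nra | apply rinner_ge0].
Qed.

Lemma hnorm0 : hnorm (hzero : H) = 0.
Proof.
  rewrite <- (hscal0 hzero), hnorm_scal.
  unfold Cabs, C0; cbn [fst snd]. replace (0 ^ 2 + 0 ^ 2) with 0 by ring.
  rewrite sqrt_0; ring.
Qed.

Lemma hnorm_eq0 x : hnorm x = 0 -> x = hzero.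
Proof.
  intro E. apply sqrt_eq_0 in E; [|apply hinner_pos].
  apply hinner_def. pose proof (hinner_self_im x).
  destruct (hinner x x); simpl in *. subst; reflexivity.
Qed.

Lemma hnorm_double x : hnorm (hadd x x) = 2 * hnorm x.
Proof.
  rewrite <- (hscal_one H x) at 1 2. rewrite <- hscal_distr_sc, hnorm_scal. f_equal.
  unfold Cabs, Defs.C1, Cadd; cbn [fst snd].
  replace ((1 + 1) ^ 2 + (0 + 0) ^ 2) with (2 ^ 2) by ring. apply sqrt_pow2; lra.
Qed.

Lemma nonneg_quadratic_discriminant A B C : 0 <= C ->
  (forall s t, 0 <= s * s * A + 2 * s * t * B + t * t * C) -> B * B <= A * C.
Proof.
  intros C_ge0 q_ge0. destruct (Rle_lt_or_eq_dec 0 C C_ge0) as [C_gt0 | <-].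
  - specialize (q_ge0 C (- B)). nra.
  - specialize (q_ge0 B (- (A + 1) / 2)). nra.
Qed.

Lemma cauchy_schwarz x y : rinner x y <= hnorm x * hnorm y.
Proof.
  assert (D : rinner x y * rinner x y <= rinner x x * rinner y y).
  { apply nonneg_quadratic_discriminant; [apply rinner_ge0|]. intros s t.
    pose proof (rinner_ge0 (hadd (hscal (s, 0) x) (hscal (t, 0) y))) as P.
    rewrite !rinner_addl, !rinner_addr, !rinner_scall, !rinner_scalr,
      (rinner_sym y x) in P.
    nra. }
  unfold hnorm. fold (rinner x x) (rinner y y).
  rewrite <- sqrt_mult by apply rinner_ge0.
  apply Rle_trans with (Rabs (rinner x y)); [apply Rle_abs|].
  rewrite <- sqrt_Rsqr_abs. apply sqrt_le_1_alt. unfold Rsqr. lra.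
Qed.

Lemma hnorm_triangle x y : hnorm (hadd x y) <= hnorm x + hnorm y.
Proof.
  pose proof (cauchy_schwarz x y). pose proof (hnorm_ge0 x). pose proof (hnorm_ge0 y).
  pose proof (hnorm_ge0 (hadd x y)).
  assert (hnorm (hadd x y) ^ 2 <= (hnorm x + hnorm y) ^ 2).
  { rewrite hnorm_sqr, !rinner_addl, !rinner_addr, (rinner_sym y x),
      <- !hnorm_sqr.
    nra. }
  nra.
Qed.

End InnerProduct.

Section OperatorNorm.
Context {H : HilbertSpace}.
Variable S : H -> H.
Hypothesis S_bounded : is_bounded_op S.

Lemma opnorm_is_lub :
  is_lub (fun r => exists x, hnorm x <= 1 /\ r = hnorm (S x)) (opnorm S).
Proof.
  destruct S_bounded as [_ [M S_le]].
  unfold opnorm. destruct (excluded_middle_informative _) as [lub | no_lub].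
  - exact (proj2_sig (constructive_indefinite_description _ lub)).
  - exfalso. apply no_lub. destruct (completeness
      (fun r => exists x, hnorm x <= 1 /\ r = hnorm (S x))) as [lub lub_spec].
    + exists (Rabs M). intros r [x [x_le1 ->]].
      specialize (S_le x). pose proof (hnorm_ge0 x). pose proof (Rle_abs M). pose proof (Rabs_pos M).
      nra.
    + exists (hnorm (S hzero)), hzero. split; [rewrite hnorm0; lra | reflexivity].
    + exists lub; exact lub_spec.
Qed.

Lemma opnorm_ge0 : 0 <= opnorm S.
Proof.
  apply (proj1 opnorm_is_lub). exists hzero.
  rewrite (linear0 S (proj1 S_bounded)), hnorm0. split; [lra | reflexivity].
Qed.

Lemma opnorm_le N : (forall x, hnorm x <= 1 -> hnorm (S x) <= N) -> opnorm S <= N.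
Proof.
  intros S_le. apply (proj2 opnorm_is_lub). intros r [x [x_le1 ->]]. auto.
Qed.

Lemma hnorm_op_le x : hnorm (S x) <= opnorm S * hnorm x.
Proof.
  destruct S_bounded as [[_ S_scal] _]. pose proof opnorm_ge0.
  destruct (Req_dec (hnorm x) 0) as [x0 | x_neq0].
  { apply hnorm_eq0 in x0. subst x.
    rewrite (linear0 S (proj1 S_bounded)), hnorm0. lra. }
  pose proof (hnorm_ge0 x). set (n := hnorm x) in *.
  assert (Cabs_invn : Cabs (/ n, 0) = / n).
  { unfold Cabs; cbn [fst snd]. replace ((/ n) ^ 2 + 0 ^ 2) with ((/ n) ^ 2) by ring.
    apply sqrt_pow2, Rlt_le, Rinv_0_lt_compat. lra. }
  assert (unit_x : hnorm (hscal (/ n, 0) x) <= 1).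
  { rewrite hnorm_scal, Cabs_invn. fold n. rewrite Rinv_l by auto. lra. }
  pose proof (proj1 opnorm_is_lub _ (ex_intro _ _ (conj unit_x eq_refl))) as Sx_le.
  rewrite S_scal, hnorm_scal, Cabs_invn in Sx_le.
  apply Rmult_le_compat_l with (r := n) in Sx_le; [|lra].
  rewrite <- Rmult_assoc, Rinv_r in Sx_le by auto. lra.
Qed.

End OperatorNorm.

Section Resolvent.
Context {H : HilbertSpace}.
Variable T : H -> H.

Lemma resolvent_is_inverse z :
  invertible_op (shift_op T z) -> is_inverse_op (shift_op T z) (resolvent T z).
Proof.
  intro inv_z. unfold resolvent. destruct (excluded_middle_informative _) as [h | h].
  - exact (proj2_sig (constructive_indefinite_description _ h)).
  - contradiction.
Qed.

Lemma resolvent_bounded z :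
  invertible_op (shift_op T z) -> is_bounded_op (resolvent T z).
Proof. intro inv_z. apply (resolvent_is_inverse z inv_z). Qed.

Lemma resolvent_identity a b y :
  invertible_op (shift_op T a) -> invertible_op (shift_op T b) ->
  resolvent T a y =
  hadd (resolvent T b y) (hscal (Csub a b) (resolvent T a (resolvent T b y))).
Proof.
  intros inv_a inv_b.
  destruct (resolvent_is_inverse a inv_a) as [[[Ra_add Ra_scal] _] [Ra_shift _]].
  destruct (resolvent_is_inverse b inv_b) as [_ [_ shift_Rb]].
  set (w := resolvent T b y).
  assert (shift_ab : shift_op T b w = hadd (shift_op T a w) (hscal (Csub a b) w)).
  { unfold shift_op. rewrite <- hadd_assoc. f_equal.
    rewrite !hopp_scalN1, !hscal_assoc, <- hscal_distr_sc. f_equal. complex_ring. }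
  rewrite <- (shift_Rb y) at 1. fold w.
  rewrite shift_ab, Ra_add, Ra_scal, Ra_shift. reflexivity.
Qed.

Section SecondDifference.
Variables mu eta : CC.
Hypothesis inv_mu : invertible_op (shift_op T mu).
Hypothesis inv_plus : invertible_op (shift_op T (Cadd mu eta)).
Hypothesis inv_minus : invertible_op (shift_op T (Csub mu eta)).

Let R0 := resolvent T mu.
Let Rp := resolvent T (Cadd mu eta).
Let Rn := resolvent T (Csub mu eta).

Lemma resolvent_second_difference x :
  hadd (R0 x) (R0 x) =
  hadd (hadd (Rp x) (Rn x)) (hscal (Copp (Cmul eta (Cadd eta eta))) (Rp (Rn (R0 x)))).
Proof.
  set (u := R0 x). set (v := Rn u). set (w := Rp v). set (k := Cadd eta eta).
  assert (Rp_x : Rp x = hadd u (hscal eta (hadd v (hscal k w)))).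
  { unfold Rp, u, R0.
    rewrite (resolvent_identity _ mu x inv_plus inv_mu), (resolvent_identity _ (Csub mu eta)
      _ inv_plus inv_minus).
    replace (Csub (Cadd mu eta) mu) with eta by complex_ring.
    replace (Csub (Cadd mu eta) (Csub mu eta)) with k by complex_ring.
    reflexivity. }
  assert (Rn_x : Rn x = hadd u (hscal (Copp eta) v)).
  { unfold Rn, v, u, R0. rewrite (resolvent_identity _ mu x inv_minus inv_mu).
    replace (Csub (Csub mu eta) mu) with (Copp eta) by complex_ring.
    reflexivity. }
  rewrite Rp_x, Rn_x, hscal_distr_vec, hscal_assoc, hadd_ACA,
    <- (hadd_assoc H (hadd u u)), (hadd_comm H (hscal eta v)),
    <- (hadd_assoc H (hscal (Cmul eta k) w)), <- hscal_distr_sc.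
  replace (Cadd eta (Copp eta)) with C0 by complex_ring.
  rewrite hscal0, hadd0r, <- hscal_distr_sc.
  replace (Cadd (Cmul eta k) (Copp (Cmul eta k))) with C0 by complex_ring.
  rewrite hscal0, hadd0r. reflexivity.
Qed.

Lemma opnorm_resolvent_midpoint_le :
  opnorm R0 <= (opnorm Rp + opnorm Rn) / 2
               + Cabs eta ^ 2 * (opnorm Rp * opnorm Rn * opnorm R0).
Proof.
  pose proof (resolvent_bounded _ inv_mu) as R0_bdd.
  pose proof (resolvent_bounded _ inv_plus) as Rp_bdd.
  pose proof (resolvent_bounded _ inv_minus) as Rn_bdd.
  fold R0 Rp Rn in R0_bdd, Rp_bdd, Rn_bdd.
  pose proof (opnorm_ge0 _ R0_bdd). pose proof (opnorm_ge0 _ Rp_bdd).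
  pose proof (opnorm_ge0 _ Rn_bdd). pose proof (pow2_ge_0 (Cabs eta)).
  apply opnorm_le; [exact R0_bdd |]. intros x x_le1.
  pose proof (hnorm_ge0 x).
  assert (two_R0_x : 2 * hnorm (R0 x) <= hnorm (Rp x) + hnorm (Rn x)
                       + Cabs eta * (2 * Cabs eta) * hnorm (Rp (Rn (R0 x)))).
  { rewrite <- hnorm_double, (resolvent_second_difference x).
    eapply Rle_trans; [apply hnorm_triangle |].
    rewrite hnorm_scal, Cabs_opp, Cabs_mul, Cabs_double.
    pose proof (hnorm_triangle (Rp x) (Rn x)). lra. }
  pose proof (hnorm_op_le _ R0_bdd x). pose proof (hnorm_op_le _ Rp_bdd x).
  pose proof (hnorm_op_le _ Rn_bdd x). pose proof (hnorm_op_le _ Rn_bdd (R0 x)).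
  pose proof (hnorm_op_le _ Rp_bdd (Rn (R0 x))).
  pose proof (hnorm_ge0 (R0 x)). pose proof (hnorm_ge0 (Rn (R0 x))).
  assert (R0_x_le : hnorm (R0 x) <= opnorm R0) by nra.
  assert (Rp_x_le : hnorm (Rp x) <= opnorm Rp) by nra.
  assert (Rn_x_le : hnorm (Rn x) <= opnorm Rn) by nra.
  assert (v_le : hnorm (Rn (R0 x)) <= opnorm Rn * opnorm R0) by nra.
  assert (w_le : hnorm (Rp (Rn (R0 x))) <= opnorm Rp * opnorm Rn * opnorm R0).
  { rewrite Rmult_assoc. eapply Rle_trans; [eassumption |].
    apply Rmult_le_compat_l; assumption. }
  assert (Cabs eta ^ 2 * hnorm (Rp (Rn (R0 x)))
          <= Cabs eta ^ 2 * (opnorm Rp * opnorm Rn * opnorm R0))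
    by (apply Rmult_le_compat_l; assumption).
  nra.
Qed.

End SecondDifference.
End Resolvent.

Lemma amgm3 a b c : 0 <= a -> 0 <= b -> 0 <= c ->
  a * b * c <= (a ^ 3 + b ^ 3 + c ^ 3) / 3.
Proof.
  intros a_ge0 b_ge0 c_ge0.
  assert (0 <= (a + b + c) * ((a - b) ^ 2 + (b - c) ^ 2 + (c - a) ^ 2)).
  { apply Rmult_le_pos; [lra |].
    pose proof (pow2_ge_0 (a - b)). pose proof (pow2_ge_0 (b - c)).
    pose proof (pow2_ge_0 (c - a)). lra. }
  nra.
Qed.

Lemma segment_in_center mu eta (A : CC -> Prop) :
  segment_in (Csub mu eta) (Cadd mu eta) A ->
  A (Csub mu eta) /\ A mu /\ A (Cadd mu eta).
Proof.
  intro seg. repeat split.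
  - replace (Csub mu eta) with
      (Cadd (Rscal (1 - 0) (Csub mu eta)) (Rscal 0 (Cadd mu eta))) at 1
      by complex_ring.
    apply seg; lra.
  - replace mu with
      (Cadd (Rscal (1 - / 2) (Csub mu eta)) (Rscal (/ 2) (Cadd mu eta))) at 1
      by complex_ring.
    apply seg; lra.
  - replace (Cadd mu eta) with
      (Cadd (Rscal (1 - 1) (Csub mu eta)) (Rscal 1 (Cadd mu eta))) at 1
      by complex_ring.
    apply seg; lra.
Qed.

Theorem theorem2p9 (H : HilbertSpace) (T : H -> H) (hT : is_bounded_op T) :
  semiconvex_bound (resolvent_set T) (PsiT_inv T)
    (fun z => 2 * (/ PsiT T z) ^ 3).
Proof.
  intros B _ _ B_resolvent c [_ c_max] mu eta seg.
  destruct (segment_in_center _ _ _ seg) as (B_minus & B_mu & B_plus).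
  assert (inv : forall z, B z -> invertible_op (shift_op T z))
    by (intros z Bz; apply NNPP, B_resolvent, Bz).
  assert (cube_le : forall z, B z -> 2 * PsiT_inv T z ^ 3 <= c).
  { intros z Bz. specialize (c_max z Bz). unfold PsiT in c_max.
    rewrite Rinv_inv in c_max. exact c_max. }
  assert (norm_ge0 : forall z, B z -> 0 <= PsiT_inv T z)
    by (intros z Bz; apply opnorm_ge0, resolvent_bounded, inv, Bz).
  pose proof (opnorm_resolvent_midpoint_le T mu eta
                (inv _ B_mu) (inv _ B_plus) (inv _ B_minus)) as midpoint.
  fold (PsiT_inv T mu) (PsiT_inv T (Cadd mu eta)) (PsiT_inv T (Csub mu eta)) in midpoint.
  assert (product_le : PsiT_inv T (Cadd mu eta) * PsiT_inv T (Csub mu eta) * PsiT_inv T mu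
                       <= c / 2).
  { eapply Rle_trans; [apply amgm3; auto |].
    pose proof (cube_le _ B_mu). pose proof (cube_le _ B_plus).
    pose proof (cube_le _ B_minus). lra. }
  pose proof (Rmult_le_compat_l _ _ _ (pow2_ge_0 (Cabs eta)) product_le).
  lra.
Qed.
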